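(* Let $\mathcal{X}$ be an input space, $\mathcal{Y}$ a label set, $\mathcal{D}$ a distribution on $\mathcal{X}\times\mathcal{Y}$ with marginal $\mathcal{P}_{\mathcal{X}}$ on $\mathcal{X}$, and $(x,y)\sim\mathcal{D}$ with $y$ the ground-truth label. Let $\mathcal{F},\mathcal{G}:\mathcal{X}\to\mathcal{Y}$ be classifiers, $\rho,\epsilon\in(0,1)$ constants, and $\mathcal{A}:\mathcal{X}\to\mathcal{X}$ an attack strategy. Suppose $\mathcal{A}$ is $\rho$-conservative and $\mathcal{F},\mathcal{G}$ have risk at most $\epsilon$, i.e. $\Pr(\mathcal{F}(x)\neq y)\le\epsilon$ and $\Pr(\mathcal{G}(x)\neq y)\le\epsilon$. Then $\Pr(\mathcal{F}(\mathcal{A}(x))\neq\mathcal{G}(\mathcal{A}(x)))\le 2\epsilon+\rho$ for $x\sim\mathcal{P}_{\mathcal{X}}$.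
   Context: Let $\mathcal{P}_{\mathcal{A}(x)}$ denote the distribution of $\mathcal{A}(x)$ when $x\sim\mathcal{P}_{\mathcal{X}}$. The total variation distance is $\|\mathcal{P}_{\mathcal{X}}-\mathcal{P}_{\mathcal{A}(x)}\|_{TV}=\sup_{C\subseteq\mathcal{X}}|\mathcal{P}_{\mathcal{X}}(C)-\mathcal{P}_{\mathcal{A}(x)}(C)|$. The attack $\mathcal{A}$ is $\rho$-conservative if $\|\mathcal{P}_{\mathcal{X}}-\mathcal{P}_{\mathcal{A}(x)}\|_{TV}\le\rho$. *)

From mathcomp Require Import all_boot all_order all_algebra.
From mathcomp Require Import all_classical all_reals all_analysis.
Set Implicit Arguments. Unset Strict Implicit. Unset Printing Implicit Defensive.
Import Order.TTheory GRing.Theory Num.Theory.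
Local Open Scope classical_set_scope.
Local Open Scope ereal_scope.

Definition tv_dist d (T : measurableType d) (R : realType)
  (P Q : set T -> \bar R) : \bar R :=
  ereal_sup [set `|P C - Q C| | C in [set C : set T | measurable C]].

Definition marginal d1 d2 (X : measurableType d1) (Y : measurableType d2)
  (R : realType) (D : set (X * Y)%type -> \bar R) : set X -> \bar R :=
  pushforward D fst.

Definition attack_dist d (X : measurableType d) (R : realType)
  (P : set X -> \bar R) (A : X -> X) : set X -> \bar R :=
  pushforward P A.

Definition conservative d (X : measurableType d) (R : realType)
  (P : set X -> \bar R) (A : X -> X) (rho : R) : Prop :=
  tv_dist P (attack_dist P A) <= rho%:E.

From mathcomp Require Import all_boot all_order all_algebra.
From mathcomp Require Import all_classical all_reals all_analysis.
From mathcomp Require Import lra.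
Set Implicit Arguments. Unset Strict Implicit. Unset Printing Implicit Defensive.
Import Order.TTheory GRing.Theory Num.Theory.
Local Open Scope classical_set_scope.
Local Open Scope ring_scope.

(* If F and G disagree at x, one of them misclassifies (x, y) whatever y is,
   so the disagreement probability is at most the sum of the two risks.  A
   rho-conservative attack changes the mass of any measurable set by at most
   rho, in particular that of the disagreement set. *)

(* No finiteness hypothesis is needed: a real bound forces [x] and [y] to be
   finite, since [+oo - +oo = -oo] in [\bar R]. *)
Lemma abse_subr_le (R : realDomainType) (x y : \bar R) (r : R) :
  (`|x - y| <= r%:E -> y <= x + r%:E)%E.
Proof.
case: x => [x||]; case: y => [y||] //=; rewrite !lee_fin.
by move=> /ler_normlP[]; lra.
Qed.

Lemma tv_dist_ub d (T : measurableType d) (R : realType)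
    (P Q : set T -> \bar R) (C : set T) :
  measurable C -> (`|P C - Q C| <= tv_dist P Q)%E.
Proof. by move=> mC; apply: ereal_sup_ubound; exists C. Qed.

Lemma conservative_attack_le d (X : measurableType d) (R : realType)
    (P : set X -> \bar R) (A : X -> X) (rho : R) (C : set X) :
  conservative P A rho -> measurable C ->
  (attack_dist P A C <= P C + rho%:E)%E.
Proof.
by move=> hA mC; apply: abse_subr_le; apply: le_trans hA; exact: tv_dist_ub.
Qed.

Lemma disagreement_sub_errors (X Y : Type) (F G : X -> Y) :
  fst @^-1` [set x | F x <> G x] `<=`
  [set p : X * Y | F p.1 <> p.2] `|` [set p | G p.1 <> p.2].
Proof.
move=> [x y] /= FxGx; case: (pselect (F x = y)) => [Fxy|]; [right|by left].
by rewrite -Fxy => /esym.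
Qed.

Lemma marginal_disagreement_le d1 d2 (X : measurableType d1)
    (Y : measurableType d2) (R : realType)
    (mu : {content set (X * Y)%type -> \bar R}) (F G : X -> Y) :
  measurable [set x | F x <> G x] ->
  measurable [set p : X * Y | F p.1 <> p.2] ->
  measurable [set p : X * Y | G p.1 <> p.2] ->
  (marginal mu [set x | F x <> G x] <=
   mu [set p | F p.1 <> p.2] + mu [set p | G p.1 <> p.2])%E.
Proof.
move=> mFG mFy mGy; apply: le_trans (measureU2 _ mFy mGy).
apply: le_measure; last exact: disagreement_sub_errors; rewrite inE.
- by rewrite -[X in measurable X]setTI; exact: measurable_fst.
- exact: measurableU.
Qed.

Theorem lemma1 (R : realType) (d1 d2 : measure_display)
  (X : measurableType d1) (Y : measurableType d2)
  (D : probability (X * Y)%type R)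
  (F G : X -> Y) (A : X -> X) (rho eps : R)
  (hrho : 0 < rho < 1) (heps : 0 < eps < 1)
  (mA : measurable_fun setT A)
  (mFy : measurable [set p : X * Y | F p.1 <> p.2])
  (mGy : measurable [set p : X * Y | G p.1 <> p.2])
  (mFG : measurable [set x : X | F x <> G x])
  (hA : conservative (marginal D) A rho)
  (hF : (D [set p | F p.1 <> p.2] <= eps%:E)%E)
  (hG : (D [set p | G p.1 <> p.2] <= eps%:E)%E) :
  (marginal D [set x | F (A x) <> G (A x)] <= (2 * eps + rho)%:E)%E.
Proof.
have -> : marginal D [set x | F (A x) <> G (A x)] =
          attack_dist (marginal D) A [set x | F x <> G x] by [].
apply: le_trans (conservative_attack_le hA mFG) _.
rewrite mulr_natl mulr2n EFinD leeD2r //.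
apply: le_trans (marginal_disagreement_le D mFG mFy mGy) _.
exact: leeD hF hG.
Qed.
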